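(* Let $0<q<1$, $x\in\mathbb{C}$ and integers $m\ge n\ge 0$. Then $$\mathcal{P}_n^{(1/4,1/4)}\big(x;q^{m-n}\,\big|\,q\big)=\frac{(q;q)_n}{(q^{m-n+1};q)_n}\,L_n^{(m-n)}\big(x\,q^{-(m+n+1)/2};q\big),$$ where $L_n^{(\rho)}(y;q)$ is the $q$-Laguerre polynomial.
   Context: $(a;q)_0=1$, $(a;q)_k=\prod_{j=0}^{k-1}(1-aq^j)$. For a nonnegative integer $\gamma$ and real $\mu,\nu$, $\mathcal{P}_n^{(\mu,\nu)}(x;q^\gamma|q)=\sum_{k=0}^n\frac{q^{k^2(\mu+\nu)+2\nu\gamma k}(q^{-n};q)_k}{(q;q)_k(q^{\gamma+1};q)_k}x^k$. The $q$-Laguerre polynomials are $$L_n^{(\rho)}(y;q)=\frac{(q^{\rho+1};q)_n}{(q;q)_n}\,{}_1\phi_1\big(q^{-n};q^{\rho+1};q;-y\,q^{n+\rho+1}\big),\qquad {}_1\phi_1(a;b;q;w)=\sum_{k\ge0}\frac{(a;q)_k}{(q;q)_k(b;q)_k}(-1)^kq^{k(k-1)/2}w^k.$$ *)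

From HB Require Import structures.
From mathcomp Require Import all_boot all_order all_algebra.
From mathcomp Require Import complex.
From mathcomp Require Import all_classical all_reals all_analysis.
Set Implicit Arguments. Unset Strict Implicit. Unset Printing Implicit Defensive.
Import Order.TTheory GRing.Theory Num.Theory ComplexField.
Local Open Scope ring_scope.
Local Open Scope complex_scope.

Definition qpoch (R : pzRingType) (a q : R) (k : nat) : R :=
  \prod_(j < k) (1 - a * q ^+ j).

Definition Pcal (R : realType) (q mu nu : R) (gam n : nat) (x : R[i]) : R[i] :=
  \sum_(k < n.+1)
    ((q `^ ((k * k)%N%:R * (mu + nu) + 2 * nu * gam%:R * k%:R))
      * qpoch ((q ^+ n)^-1) q k / (qpoch q q k * qpoch (q ^+ gam.+1) q k))%:C
     * x ^+ k.

(* When a = q^{-n}, all terms with k > n vanish, so the N = n+1 partial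
   sum is the whole (terminating) series. *)
Definition phi11_partial (R : realType) (N : nat) (a b q : R) (w : R[i]) : R[i] :=
  \sum_(k < N)
    ((qpoch a q k / (qpoch q q k * qpoch b q k)) * (-1) ^+ k
      * q ^+ ((k * (k - 1))./2))%:C * w ^+ k.

Definition qLaguerre (R : realType) (n rho : nat) (y : R[i]) (q : R) : R[i] :=
  (qpoch (q ^+ rho.+1) q n / qpoch q q n)%:C
  * phi11_partial n.+1 ((q ^+ n)^-1) (q ^+ rho.+1) q (- y * (q ^+ (n + rho).+1)%:C).

From HB Require Import structures.
From mathcomp Require Import all_boot all_order all_algebra.
From mathcomp Require Import complex.
From mathcomp Require Import all_classical all_reals all_analysis.
From mathcomp Require Import ring.
Import Order.TTheory GRing.Theory Num.Theory ComplexField.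
Local Open Scope ring_scope.
Local Open Scope complex_scope.

(* For mu = nu = 1/4 the weight of the k-th term of Pcal is q^(k^2/2 + rho k/2).
   Writing x = y q^((m+n+1)/2) with rho = m - n, this splits as
   q^(k(k-1)/2) (q^(m+1))^k (q^(-(m+n+1)/2))^k, which is exactly the weight of
   the k-th term of the 1phi1 series defining L_n^(rho)(y;q); the two
   polynomials therefore agree coefficientwise, and the prefactor of the
   q-Laguerre polynomial cancels against (q;q)_n / (q^(rho+1);q)_n. *)

Lemma qpoch_gt0 (R : realDomainType) (a q : R) (n : nat) :
  0 <= a < 1 -> 0 <= q <= 1 -> 0 < qpoch a q n.
Proof.
move=> /andP[a_ge0 a_lt1] /andP[q_ge0 q_le1].
apply: prodr_gt0 => j _; rewrite subr_gt0.
by apply: le_lt_trans a_lt1; rewrite ler_piMr // exprn_ile1.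
Qed.

Lemma natr_half_mul_pred (R : numFieldType) (k : nat) :
  ((k * (k - 1))./2)%:R = k%:R * (k%:R - 1) / 2 :> R.
Proof.
apply: (@mulIf _ 2); first by rewrite pnatr_eq0.
rewrite divfK ?pnatr_eq0 //; case: k => [|k]; first by rewrite mul0n !mul0r.
have even_k_succ_k : ~~ odd (k.+1 * (k.+1 - 1)) by rewrite subn1 oddM /=; case: odd.
by rewrite -natrM muln2 even_halfK // natrM subn1 /= -natr1 addrK.
Qed.

Lemma powR_quarter_weight (R : realType) (q : R) (m n k : nat) :
  0 < q -> (n <= m)%N ->
  q `^ ((k * k)%N%:R * (1 / 4 + 1 / 4) + 2 * (1 / 4) * (m - n)%N%:R * k%:R)
  = q ^+ (k * (k - 1))./2 * (q `^ (- ((m + n).+1)%:R / 2)) ^+ k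
    * (q ^+ m.+1) ^+ k.
Proof.
move=> q_gt0 le_nm; have q_ge0 := ltW q_gt0.
rewrite -exprM -(powR_mulrn k (powR_ge0 q _)) -powRrM -!(powR_mulrn _ q_ge0).
rewrite -!powRD ?(gt_eqF q_gt0) ?implybT //; apply: (congr1 (powR q)).
rewrite natr_half_mul_pred natrB // !natrM -[(m + n).+1]addn1 -[m.+1]addn1.
by rewrite !natrD; field.
Qed.

Lemma Pcal_quarter_phi11 (R : realType) (q : R) (x : R[i]) (m n : nat) :
  0 < q -> (n <= m)%N ->
  Pcal q (1 / 4) (1 / 4) (m - n) n x =
  phi11_partial n.+1 (q ^+ n)^-1 (q ^+ (m - n).+1) q
    (- (x * (q `^ (- ((m + n).+1)%:R / 2))%:C) * (q ^+ m.+1)%:C).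
Proof.
move=> q_gt0 le_nm; apply: eq_bigr => k _.
set c := q `^ (- _ / 2); set d := q ^+ m.+1.
have -> : (- (x * c%:C) * d%:C) ^+ k = ((-1) ^+ k * c ^+ k * d ^+ k)%:C * x ^+ k.
  have -> : - (x * c%:C) * d%:C = (-1 * c * d)%:C * x.
    by rewrite !rmorphM rmorphN1 mulN1r !mulNr; congr (- _); rewrite [RHS]mulrC mulrA.
  by rewrite exprMn -rmorphXn !exprMn.
rewrite mulrA -rmorphM powR_quarter_weight //; congr (_%:C * _).
have sign_sqr : (-1) ^+ k * (-1) ^+ k = 1 :> R by rewrite -exprMn mulN1r opprK expr1n.
by rewrite -[LHS]mul1r -{1}sign_sqr -/c; ring.
Qed.

Theorem mainTheorem3 (R : realType) (q : R) (x : R[i]) (m n : nat) :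
  0 < q -> q < 1 -> (n <= m)%N ->
  Pcal q (1 / 4) (1 / 4) (m - n) n x =
  (qpoch q q n / qpoch (q ^+ (m - n).+1) q n)%:C
  * qLaguerre n (m - n) (x * (q `^ (- ((m + n).+1)%:R / 2))%:C) q.
Proof.
move=> q_gt0 q_lt1 le_nm.
have q_range : 0 <= q <= 1 by rewrite !ltW.
have qq_gt0 : 0 < qpoch q q n by rewrite qpoch_gt0 ?ltW.
have qrho_gt0 : 0 < qpoch (q ^+ (m - n).+1) q n.
  by rewrite qpoch_gt0 // exprn_ge0 ?exprn_ilt1 ?ltW.
rewrite /qLaguerre subnKC // Pcal_quarter_phi11 // mulrA -rmorphM.
by rewrite mulrA divfK ?divff ?gt_eqF // mul1r.
Qed.
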